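(* Let $m,d$ be integers with $3\leq m<d$. Let $\mathcal{H}_A=\mathbb{C}^m\otimes\mathbb{C}^d$ and $\mathcal{H}_B=\mathbb{C}^m\otimes\mathbb{C}^d$. Let $F_m$ denote the swap of Alice's and Bob's $\mathbb{C}^m$ factors and $F_d$ the swap of Alice's and Bob's $\mathbb{C}^d$ factors, and $\mathbb{1}_m,\mathbb{1}_d$ the corresponding identities on $\mathbb{C}^m\otimes\mathbb{C}^m$ and $\mathbb{C}^d\otimes\mathbb{C}^d$. For real $\epsilon,\delta$ let $$\rho=\mathbb{1}_m\otimes\mathbb{1}_d+\frac{d\epsilon-1}{d}\,\mathbb{1}_m\otimes F_d+\frac{m\epsilon-1}{m}\,F_m\otimes\mathbb{1}_d+\frac{1-(m+d)\epsilon+dm\delta}{dm}\,F_m\otimes F_d,$$ and assume $\rho$ is positive semidefinite. If $$\epsilon m^2(d^2-1)+dm\delta(m-d)<0,$$ then $\rho$ is entangled, i.e. not a nonnegative combination of product operators $\rho^A\otimes\rho^B$ with $\rho^A\geq0$ on $\mathcal{H}_A$ and $\rho^B\geq 0$ on $\mathcal{H}_B$.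
   Context: A swap operator on $\mathbb{C}^k\otimes\mathbb{C}^k$ is $\sum_{i,j}|ij\rangle\langle ji|$; here $F_m$ and $F_d$ act on the pair of $\mathbb{C}^m$ factors and the pair of $\mathbb{C}^d$ factors respectively (one factor of each pair belonging to Alice and one to Bob), and the tensor products above are with respect to this regrouping of $\mathcal{H}_A\otimes\mathcal{H}_B$. *)

From HB Require Import structures.
From mathcomp Require Import all_boot all_order all_algebra all_field.
From mathcomp Require Import mxtens.
Set Implicit Arguments. Unset Strict Implicit. Unset Printing Implicit Defensive.
Import Order.TTheory GRing.Theory Num.Theory.
Local Open Scope ring_scope.

(* The complex field is an arbitrary numClosedFieldType C (e.g. R[i] for
   the real numbers R); its real elements play the role of the reals. *)

Definition psdmx (C : numClosedFieldType) (n : nat) (M : 'M[C]_n) : Prop :=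
  M = (map_mx Num.conj M)^T /\
  forall v : 'rV[C]_n, 0 <= (v *m M *m (map_mx Num.conj v)^T) 0 0.

Definition kd {C : numClosedFieldType} {T : eqType} (x y : T) : C := (x == y)%:R.

(* Basis of H_A = C^m (x) C^d (and H_B) indexed by mxtens_index (a, i),
   a : 'I_m, i : 'I_d.  Basis of H_A (x) H_B indexed by
   mxtens_index (x, y), x the index of Alice, y the index of Bob; this is
   the convention of the Kronecker product [*t] of mxtens.

   rho_mx m d eps delta is the operator
     1_m (x) 1_d + (d eps - 1)/d 1_m (x) F_d + (m eps - 1)/m F_m (x) 1_d
       + (1 - (m+d) eps + d m delta)/(d m) F_m (x) F_d
   where the tensor factors are regrouped as (C^m (x) C^m) (x) (C^d (x) C^d):
   matrix entry <a i, b j | . | a' i', b' j'>  (Alice (a,i), Bob (b,j)). *)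
Definition rho_mx (C : numClosedFieldType) (m d : nat) (eps delta : C) : 'M[C]_(m * d * (m * d)) :=
  \matrix_(r, c)
    let a := (mxtens_unindex (mxtens_unindex r).1).1 in
    let i := (mxtens_unindex (mxtens_unindex r).1).2 in
    let b := (mxtens_unindex (mxtens_unindex r).2).1 in
    let j := (mxtens_unindex (mxtens_unindex r).2).2 in
    let a' := (mxtens_unindex (mxtens_unindex c).1).1 in
    let i' := (mxtens_unindex (mxtens_unindex c).1).2 in
    let b' := (mxtens_unindex (mxtens_unindex c).2).1 in
    let j' := (mxtens_unindex (mxtens_unindex c).2).2 in
    let idm := kd a a' * kd b b' in
    let Fm  := kd a b' * kd b a' in
    let idd := kd i i' * kd j j' in
    let Fd  := kd i j' * kd j i' in
    idm * idd
    + ((d%:R * eps - 1) / d%:R) * (idm * Fd)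
    + ((m%:R * eps - 1) / m%:R) * (Fm * idd)
    + ((1 - (m + d)%:R * eps + d%:R * m%:R * delta) / (d%:R * m%:R)) * (Fm * Fd).

Definition separable (C : numClosedFieldType) (p : nat) (M : 'M[C]_(p * p)) : Prop :=
  exists (N : nat) (c : 'I_N -> C) (A B : 'I_N -> 'M[C]_p),
    (forall k, 0 <= c k /\ psdmx (A k) /\ psdmx (B k)) /\
    M = \sum_(k < N) c k *: (A k *t B k).

Definition entangled (C : numClosedFieldType) (p : nat) (M : 'M[C]_(p * p)) : Prop := ~ separable M.

From Pilot Require Import Defs.
From HB Require Import structures.
From mathcomp Require Import all_boot all_order all_algebra all_field.
From mathcomp Require Import mxtens ring.
Set Implicit Arguments. Unset Strict Implicit. Unset Printing Implicit Defensive.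
Import Order.TTheory GRing.Theory Num.Theory.
Local Open Scope ring_scope.
Local Open Scope sesquilinear_scope.

(* The functional [witness N = tr (N W)], with W = F_m (x) (m 1_d - F_d),
   separates rho from the separable cone.  On a product of pure states u (x) v,
   reading u and v as m x d coefficient matrices R and S, it equals
   m |M|_F^2 - |tr M|^2 for M = R^T conj(S); as M factors through C^m,
   Cauchy-Schwarz gives |tr M|^2 <= m |M|_F^2.  Spectral decomposition of the
   positive factors and linearity extend this to all separable operators,
   while a direct count gives witness rho = m (eps m^2 (d^2 - 1)
   + d m delta (m - d)) < 0. *)

Section Frobenius.
Variable C : numClosedFieldType.

Definition frobenius m n (M : 'M[C]_(m, n)) : C := \sum_i \sum_j `|M i j| ^+ 2.

Lemma sqr_norm_sum n (x : 'I_n -> C) :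
  `|\sum_k x k| ^+ 2 = \sum_k \sum_l x k * (x l)^*.
Proof. by rewrite normCK rmorph_sum big_distrlr. Qed.

Lemma sqr_norm_sum_mul_le n (x y : 'I_n -> C) :
  `|\sum_k x k * y k| ^+ 2 <= (\sum_k `|x k| ^+ 2) * (\sum_k `|y k| ^+ 2).
Proof.
have dotE (u v : 'I_n -> C) : dotmx (\row_k u k) (\row_k v k) = \sum_k u k * (v k)^*.
  by rewrite dotmxE mxE; apply: eq_bigr => k _; rewrite !mxE.
have -> : \sum_k x k * y k = dotmx (\row_k x k) (\row_k (y k)^*).
  by rewrite dotE; apply: eq_bigr => k _; rewrite conjCK.
have -> : \sum_k `|x k| ^+ 2 = dotmx (\row_k x k) (\row_k x k).
  by rewrite dotE; apply: eq_bigr => k _; rewrite normCK.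
have -> : \sum_k `|y k| ^+ 2 = dotmx (\row_k (y k)^*) (\row_k (y k)^*).
  by rewrite dotE; apply: eq_bigr => k _; rewrite conjCK normCKC.
exact: (CauchySchwarz (@dotmx C n) _ _).1.
Qed.

Lemma sqr_norm_sum_le n (x : 'I_n -> C) :
  `|\sum_k x k| ^+ 2 <= n%:R * \sum_k `|x k| ^+ 2.
Proof.
have := sqr_norm_sum_mul_le (fun _ => 1) x.
by under eq_bigr do rewrite mul1r; rewrite normr1 expr1n sumr_const card_ord.
Qed.

Lemma frobeniusE m n (M : 'M[C]_(m, n)) : frobenius M = \tr (M *m M ^t*).
Proof.
rewrite /frobenius /mxtrace; apply: eq_bigr => i _; rewrite mxE.
by apply: eq_bigr => j _; rewrite !mxE normCK.
Qed.

Lemma frobenius_unitary_mull m n p (U : 'M[C]_(m, n)) (K : 'M[C]_(m, p)) :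
  U \is unitarymx -> frobenius (U^T *m K) = frobenius K.
Proof.
move=> /unitarymxP UU; rewrite !frobeniusE.
have UtU : map_mx Num.conj U *m U^T = 1%:M.
  by rewrite -[LHS]trmxK trmx_mul trmxK map_trmx UU trmx1.
have -> : (U^T *m K) ^t* = K ^t* *m map_mx Num.conj U.
  by rewrite trmx_mul map_mxM trmxK.
by rewrite !mulmxA mxtrace_mulC !mulmxA UtU mul1mx.
Qed.

Lemma sqr_norm_trace_unitary_mul_le m n (U K : 'M[C]_(m, n)) :
  U \is unitarymx -> `|\tr (U^T *m K)| ^+ 2 <= m%:R * frobenius K.
Proof.
move=> /unitarymxP UU.
have row_normU c : \sum_i `|U c i| ^+ 2 = 1.
  have /matrixP /(_ c c) := UU; rewrite !mxE eqxx mulr1n => <-.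
  by apply: eq_bigr => i _; rewrite !mxE normCK.
have -> : \tr (U^T *m K) = \sum_c \sum_i U c i * K c i.
  rewrite /mxtrace; under eq_bigr do rewrite mxE.
  by rewrite exchange_big; apply: eq_bigr => c _; apply: eq_bigr => i _; rewrite mxE.
apply: le_trans (sqr_norm_sum_le _) _; rewrite ler_wpM2l ?ler0n //.
apply: ler_sum => c _.
by have := sqr_norm_sum_mul_le (U c) (K c); rewrite row_normU mul1r.
Qed.

Lemma frobenius_ge0 m n (M : 'M[C]_(m, n)) : 0 <= frobenius M.
Proof. by apply: sumr_ge0 => i _; apply: sumr_ge0 => j _; apply: exprn_ge0. Qed.

Lemma sqr_norm_trace_mul_le m n (X : 'M[C]_(n, m)) (Y : 'M[C]_(m, n)) :
  `|\tr (X *m Y)| ^+ 2 <= m%:R * frobenius (X *m Y).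
Proof.
(* Gram-Schmidt gives X^T = L U with U of orthonormal rows; if n < m, factor
   X Y through C^n instead. *)
have inner_le k (X' : 'M[C]_(n, k)) Y' : (k <= n)%N ->
    `|\tr (X' *m Y')| ^+ 2 <= k%:R * frobenius (X' *m Y').
  move=> le_kn; have /submxP [L XLU] := schmidt_sub X'^T.
  have -> : X' *m Y' = (schmidt X'^T)^T *m (L^T *m Y').
    by rewrite mulmxA -trmx_mul -XLU trmxK.
  rewrite frobenius_unitary_mull ?schmidt_unitarymx //.
  exact: sqr_norm_trace_unitary_mul_le (schmidt_unitarymx _ le_kn).
have [|lt_nm] := leqP m n; first exact: inner_le.
rewrite -[X *m Y]mul1mx; apply: le_trans (inner_le _ _ _ (leqnn n)) _.
by rewrite ler_wpM2r ?frobenius_ge0 // ler_nat ltnW.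
Qed.
End Frobenius.

Lemma psdmx_rank1_decomposition (C : numClosedFieldType) n (A : 'M[C]_n) :
  psdmx A -> exists (lam : 'I_n -> C) (P : 'M[C]_n),
    (forall k, 0 <= lam k) /\ A = \sum_k lam k *: ((row k P) ^t* *m row k P).
Proof.
case=> A_herm A_psd.
have /orthomx_spectralP : A \is normalmx.
  by apply/normalmxP; rewrite -map_trmx -A_herm.
set P := spectralmx A; set s := spectral_diag A.
have /unitarymxP PP : P \is unitarymx := spectral_unitarymx A.
rewrite invmx_unitary ?spectral_unitarymx // => AE.
exists (fun k => s 0 k), P; split.
  move=> k; have := A_psd (row k P).
  have -> : (map_mx Num.conj (row k P))^T = P ^t* *m delta_mx k 0.
    by rewrite map_trmx tr_row map_col colE.
  rewrite AE rowE !mulmxA -(mulmxA _ P) PP mulmx1 -(mulmxA _ P) PP mulmx1.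
  by rewrite -rowE -colE !mxE eqxx mulr1n.
apply/matrixP => x y; rewrite AE mul_mx_diag summxE mxE.
apply: eq_bigr => k _; rewrite !mxE big_ord1 !mxE; ring.
Qed.

Section Kronecker.
Variables (R : comPzRingType) (I : finType) (m n p q : nat).

Lemma tensmx_suml (c : I -> R) (A : I -> 'M[R]_(m, n)) (B : 'M[R]_(p, q)) :
  (\sum_k c k *: A k) *t B = \sum_k c k *: (A k *t B).
Proof.
apply/matrixP => x y; rewrite !mxE summxE mulr_suml.
by rewrite summxE; apply: eq_bigr => k _; rewrite !mxE mulrA.
Qed.

Lemma tensmx_sumr (c : I -> R) (A : 'M[R]_(m, n)) (B : I -> 'M[R]_(p, q)) :
  A *t (\sum_k c k *: B k) = \sum_k c k *: (A *t B k).
Proof.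
apply/matrixP => x y; rewrite !mxE summxE mulr_sumr summxE.
by apply: eq_bigr => k _; rewrite !mxE mulrCA.
Qed.

End Kronecker.

Section KroneckerDelta.
Variable C : numClosedFieldType.

Lemma sum_kd n (x : 'I_n) : \sum_y (kd x y : C) = 1.
Proof. by rewrite (bigD1 x) //= /kd eqxx big1 ?addr0 // => y /negPf; rewrite eq_sym => ->. Qed.

Lemma sum2_kd n : \sum_(x < n) \sum_(y < n) (kd x y : C) = n%:R.
Proof. by under eq_bigr do rewrite sum_kd; rewrite sumr_const card_ord. Qed.

Lemma sum2_1 n : \sum_(x < n) \sum_(y < n) (1 : C) = n%:R * n%:R.
Proof. by under eq_bigr do rewrite sumr_const card_ord; rewrite sumr_const card_ord mulr_natr. Qed.

End KroneckerDelta.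

Section Witness.
Variables (C : numClosedFieldType) (m d : nat).

Definition tens_idx (a : 'I_m) (i : 'I_d) (b : 'I_m) (j : 'I_d) : 'I_(m * d * (m * d)) :=
  mxtens_index (mxtens_index (a, i), mxtens_index (b, j)).

Definition sum4 (F : 'I_d -> 'I_d -> 'I_m -> 'I_m -> C) : C :=
  \sum_i \sum_j \sum_a \sum_b F i j a b.

Lemma eq_sum4 F G : (forall i j a b, F i j a b = G i j a b) -> sum4 F = sum4 G.
Proof.
move=> FG; apply: eq_bigr => i _; apply: eq_bigr => j _.
by apply: eq_bigr => a _; apply: eq_bigr => b _.
Qed.

Lemma sum4D F G : sum4 (fun i j a b => F i j a b + G i j a b) = sum4 F + sum4 G.
Proof.
rewrite /sum4 -big_split; apply: eq_bigr => i _; rewrite -big_split.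
by apply: eq_bigr => j _; rewrite -big_split; apply: eq_bigr => a _; rewrite -big_split.
Qed.

Lemma sum4Z c F : sum4 (fun i j a b => c * F i j a b) = c * sum4 F.
Proof.
rewrite /sum4 mulr_sumr; apply: eq_bigr => i _; rewrite mulr_sumr.
by apply: eq_bigr => j _; rewrite mulr_sumr; apply: eq_bigr => a _; rewrite mulr_sumr.
Qed.

Lemma sum4_sum (I : finType) (G : I -> 'I_d -> 'I_d -> 'I_m -> 'I_m -> C) :
  sum4 (fun i j a b => \sum_k G k i j a b) = \sum_k sum4 (G k).
Proof.
rewrite /sum4 [RHS]exchange_big; apply: eq_bigr => i _; rewrite [RHS]exchange_big.
apply: eq_bigr => j _; rewrite [RHS]exchange_big; apply: eq_bigr => a _.
by rewrite [RHS]exchange_big.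
Qed.

Lemma sum4_mul (u : 'I_m -> 'I_m -> C) (v : 'I_d -> 'I_d -> C) :
  sum4 (fun i j a b => u a b * v i j) = (\sum_a \sum_b u a b) * (\sum_i \sum_j v i j).
Proof.
rewrite /sum4 mulr_sumr; apply: eq_bigr => i _; rewrite mulr_sumr.
apply: eq_bigr => j _; rewrite mulr_suml; apply: eq_bigr => a _.
by rewrite mulr_suml.
Qed.

Definition witness (N : 'M[C]_(m * d * (m * d))) : C :=
  m%:R * sum4 (fun i j a b => N (tens_idx b i a j) (tens_idx a i b j))
  - sum4 (fun i j a b => N (tens_idx b j a i) (tens_idx a i b j)).

Lemma witness_sum (I : finType) (c : I -> C) (F : I -> 'M[C]_(m * d * (m * d))) :
  witness (\sum_k c k *: F k) = \sum_k c k * witness (F k).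
Proof.
have entry x y : (\sum_k c k *: F k) x y = \sum_k c k * F k x y.
  by rewrite summxE; apply: eq_bigr => k _; rewrite mxE.
rewrite /witness !(eq_sum4 (fun i j a b => entry _ _)) !sum4_sum.
rewrite mulr_sumr -sumrB; apply: eq_bigr => k _; rewrite !sum4Z; ring.
Qed.

Lemma witness_sum_ge0 (I : finType) (c : I -> C) (F : I -> 'M[C]_(m * d * (m * d))) :
  (forall k, 0 <= c k) -> (forall k, 0 <= witness (F k)) ->
  0 <= witness (\sum_k c k *: F k).
Proof.
by move=> c_ge0 F_ge0; rewrite witness_sum; apply: sumr_ge0 => k _; rewrite mulr_ge0.
Qed.

Definition mx_of_tens (u : 'rV[C]_(m * d)) : 'M[C]_(m, d) :=
  \matrix_(a, i) u 0 (mxtens_index (a, i)).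

Lemma witness_pure_tens (u v : 'rV[C]_(m * d)) :
  let M := (mx_of_tens u)^T *m map_mx Num.conj (mx_of_tens v) in
  witness ((u ^t* *m u) *t (v ^t* *m v)) = m%:R * frobenius M - `|\tr M| ^+ 2.
Proof.
move=> M.
have rank1E (w : 'rV[C]_(m * d)) x y : (w ^t* *m w) x y = (w 0 x)^* * w 0 y.
  by rewrite !mxE big_ord1 !mxE.
have ME i j : M i j = \sum_a u 0 (mxtens_index (a, i)) * (v 0 (mxtens_index (a, j)))^*.
  by rewrite !mxE; apply: eq_bigr => a _; rewrite !mxE.
rewrite /witness /frobenius /mxtrace sqr_norm_sum; congr (_ * _ - _).
  apply: eq_bigr => i _; apply: eq_bigr => j _; rewrite ME sqr_norm_sum.
  apply: eq_bigr => a _; apply: eq_bigr => b _.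
  by rewrite /tens_idx tensmxE !rank1E rmorphM /= conjCK; ring.
apply: eq_bigr => i _; apply: eq_bigr => j _; rewrite !ME rmorph_sum big_distrlr /=.
apply: eq_bigr => a _; apply: eq_bigr => b _.
by rewrite /tens_idx tensmxE !rank1E rmorphM /= conjCK; ring.
Qed.

Lemma witness_pure_tens_ge0 (u v : 'rV[C]_(m * d)) :
  0 <= witness ((u ^t* *m u) *t (v ^t* *m v)).
Proof. by rewrite witness_pure_tens subr_ge0 sqr_norm_trace_mul_le. Qed.

Lemma witness_tens_psd_ge0 (A B : 'M[C]_(m * d)) :
  psdmx A -> psdmx B -> 0 <= witness (A *t B).
Proof.
move=> /psdmx_rank1_decomposition [lam [P [lam_ge0 ->]]].
move=> /psdmx_rank1_decomposition [mu [Q [mu_ge0 ->]]].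
rewrite tensmx_suml; apply: witness_sum_ge0 => // k.
rewrite tensmx_sumr; apply: witness_sum_ge0 => // l.
exact: witness_pure_tens_ge0.
Qed.

(* Plain [separable] would be field-extension separability from all_field. *)
Lemma witness_separable_ge0 (N : 'M[C]_(m * d * (m * d))) :
  Defs.separable N -> 0 <= witness N.
Proof.
case=> K [c [A [B [ABc_ge0 ->]]]].
apply: witness_sum_ge0 => k; have [c_ge0 [A_psd B_psd]] := ABc_ge0 k; first exact: c_ge0.
exact: witness_tens_psd_ge0.
Qed.

Lemma sum4_kd (c0 c1 c2 c3 : C) :
  sum4 (fun i j a b => c0 * (kd a b * kd i j) + c1 * kd a b + c2 * kd i j + c3)
  = m%:R * d%:R * (c0 + c1 * d%:R + c2 * m%:R + c3 * m%:R * d%:R).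
Proof.
transitivity (
    c0 * ((\sum_(a < m) \sum_(b < m) (kd a b : C)) * (\sum_(i < d) \sum_(j < d) (kd i j : C)))
  + c1 * ((\sum_(a < m) \sum_(b < m) (kd a b : C)) * (\sum_(i < d) \sum_(j < d) (1 : C)))
  + c2 * ((\sum_(a < m) \sum_(b < m) (1 : C)) * (\sum_(i < d) \sum_(j < d) (kd i j : C)))
  + c3 * ((\sum_(a < m) \sum_(b < m) (1 : C)) * (\sum_(i < d) \sum_(j < d) (1 : C)))).
  rewrite -!sum4_mul -!sum4Z -!sum4D; apply: eq_sum4 => i j a b.
  by rewrite !mulr1 !mul1r.
by rewrite !sum2_kd !sum2_1; ring.
Qed.

Lemma witness_rho (eps delta : C) : (0 < m)%N -> (0 < d)%N ->
  witness (rho_mx m d eps delta) = m%:R *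
    (eps * m%:R ^+ 2 * (d%:R ^+ 2 - 1) + d%:R * m%:R * delta * (m%:R - d%:R)).
Proof.
move=> m_gt0 d_gt0.
set al := (d%:R * eps - 1) / d%:R.
set be := (m%:R * eps - 1) / m%:R.
set ga := (1 - (m + d)%:R * eps + d%:R * m%:R * delta) / (d%:R * m%:R).
have rhoE (x y : 'I_m) (k l : 'I_d) : rho_mx m d eps delta (tens_idx y k x l) (tens_idx x k y l)
    = al * (kd x y * kd k l) + 1 * kd x y + ga * kd k l + be.
  rewrite mxE /tens_idx !mxtens_indexK /= /kd !eqxx [y == x]eq_sym [l == k]eq_sym.
  by case: (x == y); case: (k == l); rewrite /= /al /be /ga; ring.
have rhoE' (x y : 'I_m) (k l : 'I_d) : rho_mx m d eps delta (tens_idx y l x k) (tens_idx x k y l)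
    = 1 * (kd x y * kd k l) + al * kd x y + be * kd k l + ga.
  rewrite mxE /tens_idx !mxtens_indexK /= /kd !eqxx [y == x]eq_sym [l == k]eq_sym.
  by case: (x == y); case: (k == l); rewrite /= /al /be /ga; ring.
rewrite /witness (eq_sum4 (fun i j a b => rhoE a b i j)) (eq_sum4 (fun i j a b => rhoE' a b i j)).
rewrite !sum4_kd /al /be /ga natrD.
have m_neq0 : m%:R != 0 :> C by rewrite pnatr_eq0 -lt0n.
have d_neq0 : d%:R != 0 :> C by rewrite pnatr_eq0 -lt0n.
by field; rewrite d_neq0 m_neq0.
Qed.

End Witness.

Theorem mainTheorem6 (C : numClosedFieldType) (m d : nat) (eps delta : C) :
  (3 <= m)%N -> (m < d)%N ->
  eps \is Num.real -> delta \is Num.real ->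
  psdmx (rho_mx m d eps delta) ->
  eps * m%:R ^+ 2 * (d%:R ^+ 2 - 1) + d%:R * m%:R * delta * (m%:R - d%:R) < 0 ->
  entangled (rho_mx m d eps delta).
Proof.
move=> m_ge3 lt_md _ _ _ value_lt0 rho_sep.
have m_gt0 : (0 < m)%N by apply: leq_trans m_ge3.
have d_gt0 : (0 < d)%N by apply: leq_trans lt_md.
have := witness_separable_ge0 rho_sep.
by rewrite witness_rho // pmulr_rge0 ?ltr0n // (lt_geF value_lt0).
Qed.
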